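(* If a permutation class has a finite $m$-basis (i.e. it equals the set of permutations avoiding, as submatrices, the matrices of some finite antichain of quasi-permutation matrices), then its $p$-basis is finite.
   Context: A permutation $\sigma$ of $\{1,\dots,n\}$ is identified with its permutation matrix ($M_\sigma(i,j)=1$ iff $i=\sigma(j)$). A matrix $M'$ is a submatrix of $M$ ($M'\preccurlyeq M$) if it is obtained from $M$ by deleting rows and/or columns; the pattern order on permutations is this order restricted to permutation matrices, and a permutation class is a set of permutations closed downward for it. A quasi-permutation matrix is a binary matrix with at most one $1$ in each row and column. An $m$-basis of a permutation class $\mathcal{C}$ is an antichain $\mathcal{M}$ of matrices (for $\preccurlyeq$) such that $\mathcal{C}$ is exactly the set of permutations having no submatrix in $\mathcal{M}$. The $p$-basis of $\mathcal{C}$ is the set of permutations not in $\mathcal{C}$ that are minimal for the pattern order among permutations not in $\mathcal{C}$. *)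

From Stdlib Require List.
From mathcomp Require Import all_boot all_algebra all_fingroup.
Set Implicit Arguments. Unset Strict Implicit. Unset Printing Implicit Defensive.

Record bmat := BMat { nrows : nat; ncols : nat; entries : 'M[bool]_(nrows, ncols) }.

Definition incr (m m' : nat) (f : 'I_m -> 'I_m') : Prop :=
  forall i j : 'I_m, (i < j)%N -> (f i < f j)%N.

Definition submx (A B : bmat) : Prop :=
  exists (f : 'I_(nrows A) -> 'I_(nrows B)) (g : 'I_(ncols A) -> 'I_(ncols B)),
    incr f /\ incr g /\
    forall i j, entries A i j = entries B (f i) (g j).

Definition quasi_perm (A : bmat) : Prop :=
  (forall i j j', entries A i j -> entries A i j' -> j = j') /\
  (forall i i' j, entries A i j -> entries A i' j -> i = i').

Definition perm_t := {n : nat & 'S_n}.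

Definition pmx (p : perm_t) : bmat :=
  @BMat (tag p) (tag p) (\matrix_(i, j) (i == (tagged p) j)).

Definition pattern (p q : perm_t) : Prop := submx (pmx p) (pmx q).

Definition perm_class (C : perm_t -> Prop) : Prop :=
  forall p q, C q -> pattern p q -> C p.

Definition antichain (M : seq bmat) : Prop :=
  forall A B, List.In A M -> List.In B M -> submx A B -> A = B.

Definition m_basis (C : perm_t -> Prop) (M : seq bmat) : Prop :=
  antichain M /\
  forall p, C p <-> ~ (exists A, List.In A M /\ submx A (pmx p)).

Definition in_p_basis (C : perm_t -> Prop) (p : perm_t) : Prop :=
  ~ C p /\ forall q, ~ C q -> pattern q p -> q = p.

From Pilot Require Import Defs.
From Stdlib Require List Classical.
From mathcomp Require Import all_boot all_algebra all_fingroup.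

Set Implicit Arguments.
Unset Strict Implicit.
Unset Printing Implicit Defensive.

(** If [A] is a submatrix of the matrix of [p], only the columns hit by [A]
    and the columns [p^-1(i)] of the rows [i] hit by [A] matter: restricting
    [p] to these at most [nrows A + ncols A] columns (and their image rows)
    yields a pattern of [p] that still contains [A].  Hence every element of
    the p-basis, being minimal, has size at most [nrows A + ncols A] for some
    [A] of the m-basis, and there are finitely many such permutations. *)

Lemma incr_inj m m' (f : 'I_m -> 'I_m') : incr f -> injective f.
Proof.
by move=> hf i j e; apply/val_inj; case: (ltngtP i j) => // /hf; rewrite e ltnn.
Qed.

Lemma incr_mono m m' (f : 'I_m -> 'I_m') : incr f ->
  forall i j, (f i < f j)%N = (i < j)%N.
Proof.
move=> hf i j; case: (ltngtP i j) => [/hf //|/hf lt_fj_fi|/val_inj ->].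
- by apply/negbTE; rewrite -leqNgt ltnW.
- exact: ltnn.
Qed.

Lemma incr_enum_val n (T : {set 'I_n}) : incr (@enum_val _ (mem T)).
Proof.
move=> i j lt_ij.
have sorted_T : sorted ltn (map val (enum T)).
  rewrite -[enum _](eq_filter (mem_enum _)).
  rewrite -(eq_filter (mem_map val_inj _)) -filter_map.
  by rewrite (sorted_filter ltn_trans) // unlock val_ord_enum iota_ltn_sorted.
have si : (i < size (enum T))%N by rewrite -cardE ltn_ord.
have sj : (j < size (enum T))%N by rewrite -cardE ltn_ord.
rewrite (enum_val_nth (enum_val i)) (enum_val_nth (enum_val i) j).
rewrite -(nth_map _ 0 val si) -(nth_map _ 0 val sj).
by apply: (sorted_ltn_nth ltn_trans) => //; rewrite inE size_map.
Qed.

Lemma incr_cast_ord n k k' (e : k = k') (f : 'I_k' -> 'I_n) :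
  incr f -> incr (f \o cast_ord e).
Proof. by move=> hf i j lt_ij; apply: hf. Qed.

Lemma submx_factor (A B' B : bmat)
    (f : 'I_(nrows A) -> 'I_(nrows B)) (g : 'I_(ncols A) -> 'I_(ncols B))
    (rf : 'I_(nrows B') -> 'I_(nrows B)) (cf : 'I_(ncols B') -> 'I_(ncols B)) :
  incr f -> incr g -> incr rf -> incr cf ->
  (forall i j, entries A i j = entries B (f i) (g j)) ->
  (forall i j, entries B' i j = entries B (rf i) (cf j)) ->
  (forall i, exists i', rf i' = f i) -> (forall j, exists j', cf j' = g j) ->
  Defs.submx A B'.
Proof.
move=> incf incg incrf inccf eA eB' rows_f cols_g.
have ex_f i : exists i', rf i' == f i by have [i' <-] := rows_f i; exists i'.
have ex_g j : exists j', cf j' == g j by have [j' <-] := cols_g j; exists j'.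
pose f' i := xchoose (ex_f i); pose g' j := xchoose (ex_g j).
have f'E i : rf (f' i) = f i by apply/eqP; exact: xchooseP (ex_f i).
have g'E j : cf (g' j) = g j by apply/eqP; exact: xchooseP (ex_g j).
exists f', g'; split; [|split].
- by move=> i j; rewrite -(incr_mono incrf) !f'E; apply: incf.
- by move=> i j; rewrite -(incr_mono inccf) !g'E; apply: incg.
- by move=> i j; rewrite eA eB' f'E g'E.
Qed.

Lemma perm_restrict n (s : 'S_n) (S : {set 'I_n}) :
  exists (q : 'S_#|S|) (rf cf : 'I_#|S| -> 'I_n),
    [/\ incr rf, incr cf, forall x, x \in s @: S -> exists i, rf i = x,
        forall x, x \in S -> exists j, cf j = x &
        forall i j, (i == q j) = (rf i == s (cf j))].
Proof.
have card_sS : #|s @: S| = #|S| by rewrite card_imset //; exact: perm_inj.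
pose cf := @enum_val _ (mem S).
pose rf := @enum_val _ (mem (s @: S)) \o cast_ord (esym card_sS).
have inccf : incr cf by apply: incr_enum_val.
have incrf : incr rf by apply/incr_cast_ord/incr_enum_val.
have rf_onto x : x \in s @: S -> exists i, rf i = x.
  move=> xsS; exists (cast_ord card_sS (enum_rank_in xsS x)).
  by rewrite /rf /= cast_ordK enum_rankK_in.
have ex_q j : exists i, rf i == s (cf j).
  by have [i <-] := rf_onto _ (imset_f s (enum_valP j)); exists i.
pose qf j := xchoose (ex_q j).
have qfE j : rf (qf j) = s (cf j) by apply/eqP; exact: xchooseP (ex_q j).
have qf_inj : injective qf.
  move=> j1 j2 e; apply: (incr_inj inccf); apply: (@perm_inj _ s).
  by rewrite -!qfE e.
exists (perm qf_inj), rf, cf; split => //.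
- by move=> x xS; exists (enum_rank_in xS x); rewrite /cf enum_rankK_in.
- by move=> i j; rewrite permE -qfE (inj_eq (incr_inj incrf)).
Qed.

Lemma submx_pmx_small_pattern (A : bmat) (p : perm_t) :
  Defs.submx A (pmx p) ->
  exists q : perm_t,
    [/\ (tag q <= nrows A + ncols A)%N, pattern q p & Defs.submx A (pmx q)].
Proof.
case: p => n s [f [g [incf [incg eA]]]] /=.
pose S := g @: [set: 'I_(ncols A)] :|: (s^-1)%g @: (f @: [set: 'I_(nrows A)]).
have card_S : (#|S| <= nrows A + ncols A)%N.
  rewrite addnC; apply: leq_trans (leq_card_setU _ _) _; apply: leq_add.
    by apply: leq_trans (leq_imset_card _ _) _; rewrite cardsT card_ord.
  rewrite card_imset; last exact: perm_inj.
  by apply: leq_trans (leq_imset_card _ _) _; rewrite cardsT card_ord.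
have [q [rf [cf [incrf inccf rf_onto cf_onto qE]]]] := perm_restrict s S.
exists (existT _ #|S| q); split => //.
- by exists rf, cf; split; [|split] => // i j; rewrite !mxE qE.
- apply: (@submx_factor A (pmx (existT _ #|S| q)) (pmx (existT _ n s))
    _ _ rf cf incf incg incrf inccf eA).
  + by move=> i j; rewrite !mxE qE.
  + move=> i; apply: rf_onto; rewrite -[f i](permKV s); apply/imset_f.
    by rewrite inE; apply/orP; right; apply/imset_f/imset_f.
  + by move=> j; apply: cf_onto; rewrite inE; apply/orP; left; exact: imset_f.
Qed.

Lemma In_mem (T : eqType) (x : T) (s : seq T) : x \in s -> List.In x s.
Proof. by elim: s => //= y s IH; rewrite inE => /orP [/eqP ->|/IH]; [left|right]. Qed.

Lemma In_leq_sumn (T : Type) (w : T -> nat) (s : seq T) x :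
  List.In x s -> (w x <= sumn (map w s))%N.
Proof.
elim: s => //= y s IH [->|/IH le_wx]; first exact: leq_addr.
exact: leq_trans le_wx (leq_addl _ _).
Qed.

Definition perms_upto (N : nat) : seq perm_t :=
  [seq existT (fun k => 'S_k) n s | n <- iota 0 N.+1, s <- enum 'S_n].

Lemma mem_perms_upto N (p : perm_t) : (tag p <= N)%N -> p \in perms_upto N.
Proof.
case: p => n s /= le_nN.
by apply: (allpairs_f_dep (fun k (t : 'S_k) => existT _ k t)); rewrite ?mem_iota ?mem_enum.
Qed.

Theorem corollary1 (C : perm_t -> Prop) (M : seq bmat) :
  perm_class C ->
  (forall A, List.In A M -> quasi_perm A) ->
  m_basis C M ->
  exists B : seq perm_t, forall p, in_p_basis C p -> List.In p B.
Proof.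
move=> _ _ [_ C_avoids_M].
pose w (A : bmat) := (nrows A + ncols A)%N.
exists (perms_upto (sumn (map w M))) => p [p_notin_C p_minimal].
have [A [A_in_M A_sub_p]] : exists A, List.In A M /\ Defs.submx A (pmx p).
  by apply: Classical_Prop.NNPP => no_A; apply/p_notin_C/C_avoids_M.
have [q [small_q q_sub_p A_sub_q]] := submx_pmx_small_pattern A_sub_p.
have q_notin_C : ~ C q by move/C_avoids_M; apply; exists A.
rewrite -(p_minimal q q_notin_C q_sub_p); apply/In_mem/mem_perms_upto.
exact: leq_trans small_q (In_leq_sumn w A_in_M).
Qed.
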